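(* Let $\Omega_2=\{\omega_1,\omega_2\}$ with $\omega_1\neq\omega_2$, and $\mathcal{A}_2=2^{\Omega_2}$. Let $1$ denote the coevent $\omega_1^*\oplus\omega_2^*\oplus\omega_1^*\omega_2^*$ (equivalently, $1(A)=1$ iff $A\neq\emptyset$). A $q$-measure $\mu$ on $\mathcal{A}_2$ actualizes $1$ if and only if $\mu(\{\omega_1\})\neq 0$, $\mu(\{\omega_2\})\neq 0$ and $\mu(\Omega_2)=\max(\mu(\{\omega_1\}),\mu(\{\omega_2\}))$.
   Context: Let $\Omega$ be a finite nonempty set and $\mathcal{A}=2^\Omega$. A coevent is a map $\phi:\mathcal{A}\to\{0,1\}$ with $\phi(\emptyset)=0$. For $\omega\in\Omega$ the evaluation map $\omega^*$ is the coevent with $\omega^*(A)=1$ if $\omega\in A$ and $0$ otherwise. Coevents are combined pointwise: $(\phi\oplus\psi)(A)=\phi(A)+\psi(A) \bmod 2$ and $(\phi\psi)(A)=\phi(A)\psi(A)$. For $f:\Omega\to[0,\infty)$ and a coevent $\phi$, the $q$-integral is $\int f\,d\phi=\int_0^\infty \phi(\{\omega\in\Omega: f(\omega)>\lambda\})\,d\lambda$ (Lebesgue measure in $\lambda$), and for $A\in\mathcal{A}$, $\int_A f\,d\phi=\int f\chi_A\,d\phi$. A $q$-measure is a map $\mu:\mathcal{A}\to[0,\infty)$ such that for all pairwise disjoint $A,B,C\in\mathcal{A}$: $\mu(A\cup B\cup C)=\mu(A\cup B)+\mu(A\cup C)+\mu(B\cup C)-\mu(A)-\mu(B)-\mu(C)$.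 The $q$-measure $\mu$ actualizes $\phi$ if there is a symmetric function $f:\Omega\times\Omega\to(0,\infty)$ such that for all $A\in\mathcal{A}$, $\mu(A)=\int g_A\,d\phi$, where $g_A(\omega')=\int_A f(\cdot,\omega')\,d\phi$ (the $q$-integral over $A$ of $\omega\mapsto f(\omega,\omega')$). *)

From Stdlib Require Import Reals Bool.
Open Scope R_scope.

Definition event (T : Type) := T -> bool.
Definition coevent (T : Type) := event T -> bool.

Definition ev_empty {T : Type} : event T := fun _ => false.
Definition ev_full {T : Type} : event T := fun _ => true.
Definition ev_union {T : Type} (A B : event T) : event T := fun w => A w || B w.
Definition ev_disjoint {T : Type} (A B : event T) : Prop :=
  forall w, A w && B w = false.
Definition ev_singleton {T : Type} (eqd : forall x y : T, {x = y} + {x <> y})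
  (a : T) : event T := fun w => if eqd w a then true else false.

Definition evalmap {T : Type} (w : T) : coevent T := fun A => A w.
Definition cxor {T : Type} (phi psi : coevent T) : coevent T :=
  fun A => xorb (phi A) (psi A).
Definition cmul {T : Type} (phi psi : coevent T) : coevent T :=
  fun A => phi A && psi A.

Definition one_coevent {T : Type} (w1 w2 : T) : coevent T :=
  cxor (cxor (evalmap w1) (evalmap w2)) (cmul (evalmap w1) (evalmap w2)).

Definition b2R (b : bool) : R := if b then 1 else 0.

Definition chi {T : Type} (A : event T) (w : T) : R := b2R (A w).

Definition level {T : Type} (h : T -> R) (l : R) : event T :=
  fun w => if Rlt_dec l (h w) then true else false.

(* is_qint h phi I : the q-integral  int_0^oo phi({h > l}) dl  equals I.
   For h bounded by M >= 0 the integrand vanishes on [M, oo) (as phi(empty)=0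
   for coevents), so the integral over [0,oo) is the (Riemann) integral of the
   step function over [0, M]. *)
Definition is_qint {T : Type} (h : T -> R) (phi : coevent T) (I : R) : Prop :=
  exists M : R, 0 <= M /\ (forall w, h w <= M) /\
    exists pr : Riemann_integrable (fun l => b2R (phi (level h l))) 0 M,
      RiemannInt pr = I.

Definition is_qmeasure {T : Type} (mu : event T -> R) : Prop :=
  (forall A, 0 <= mu A) /\
  (forall A B C, ev_disjoint A B -> ev_disjoint A C -> ev_disjoint B C ->
     mu (ev_union (ev_union A B) C) =
       mu (ev_union A B) + mu (ev_union A C) + mu (ev_union B C)
       - mu A - mu B - mu C).

Definition actualizes {T : Type} (mu : event T -> R) (phi : coevent T) : Prop :=
  exists f : T -> T -> R,
    (forall x y, f x y = f y x) /\ (forall x y, 0 < f x y) /\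
    exists g : event T -> T -> R,
      (forall A w', is_qint (fun w => f w w' * chi A w) phi (g A w')) /\
      (forall A, is_qint (g A) phi (mu A)).

(* On a two-point space the coevent 1 takes the value 1 exactly on nonempty events, so
   the level set {h > l} counts iff l < max(h w1, h w2): the q-integral of h against 1 is
   max(0, h w1, h w2).  Hence mu is actualized by a positive kernel f iff
   mu(A) = max { f(w, w') | w in A, w' arbitrary }.  This forces mu{wi} = max_w' f(wi, w') > 0
   and mu(Omega) = max(mu{w1}, mu{w2}); conversely the kernel f(x, y) = min(mu{x}, mu{y})
   has these maxima. *)

From Stdlib Require Import Reals Bool Lra Lia List FunctionalExtensionality.
Import ListNotations.
Open Scope R_scope.

Lemma RiemannInt_StepFun {a b : R} (phi : StepFun a b) : a <= b ->
  { pr : Riemann_integrable phi a b | RiemannInt pr = RiemannInt_SF phi }.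
Proof.
  intros Hab.
  set (zero := mkStepFun (StepFun_P4 a b 0)).
  assert (Hzero : RiemannInt_SF zero = 0).
  { unfold zero; rewrite StepFun_P18; ring. }
  assert (Happrox : forall t, Rmin a b <= t <= Rmax a b -> Rabs (phi t - phi t) <= zero t).
  { intros t _; simpl; unfold fct_cte; rewrite Rminus_diag, Rabs_R0; lra. }
  assert (Hsmall : forall eps : posreal, Rabs (RiemannInt_SF zero) < eps).
  { intros eps; rewrite Hzero, Rabs_R0; apply cond_pos. }
  exists (fun eps => existT _ phi (exist _ zero (conj Happrox (Hsmall eps)))).
  unfold RiemannInt; destruct (RiemannInt_exists _ RinvN RinvN_cv) as [l Hl].
  apply UL_sequence with (fun _ : nat => RiemannInt_SF phi); [exact Hl|].
  intros e He; exists 0%nat; intros; unfold R_dist; rewrite Rminus_diag, Rabs_R0; exact He.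
Qed.

Definition ind_lt (m : R) : R -> R := fun l => if Rlt_dec l m then 1 else 0.

Lemma adapted_couple_ind_lt (m M : R) : 0 <= M -> m <= M ->
  adapted_couple (ind_lt m) 0 M [0; Rmax 0 m; M] [1; 0].
Proof.
  intros HM HmM.
  assert (Hc0 : 0 <= Rmax 0 m) by apply Rmax_l.
  assert (HcM : Rmax 0 m <= M) by (apply Rmax_lub; lra).
  unfold adapted_couple; repeat split.
  - intros i Hi; simpl in Hi; destruct i as [|[|i]]; simpl; [lra|lra|lia].
  - simpl; rewrite Rmin_left; lra.
  - simpl; rewrite Rmax_right; lra.
  - intros i Hi; simpl in Hi; unfold ind_lt.
    destruct i as [|[|i]]; simpl; intros x [Hx1 Hx2]; [| |lia];
      destruct (Rlt_dec x m); auto; exfalso; unfold Rmax in *;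
      destruct (Rle_dec 0 m); lra.
Qed.

Lemma RiemannInt_ind_lt (m M : R) : 0 <= M -> m <= M ->
  { pr : Riemann_integrable (ind_lt m) 0 M | RiemannInt pr = Rmax 0 m }.
Proof.
  intros HM HmM.
  set (phi := mkStepFun (existT _ _ (existT _ _ (adapted_couple_ind_lt m M HM HmM))
                : IsStepFun (ind_lt m) 0 M)).
  destruct (RiemannInt_StepFun phi HM) as [pr Hpr].
  exists pr; etransitivity; [exact Hpr|]; unfold RiemannInt_SF.
  destruct (Rle_dec 0 M); [simpl; ring | contradiction].
Qed.

Lemma one_coevent_orb {T : Type} (w1 w2 : T) (A : event T) :
  one_coevent w1 w2 A = A w1 || A w2.
Proof. unfold one_coevent, cxor, cmul, evalmap; now destruct (A w1), (A w2). Qed.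

Lemma b2R_orb_level {T : Type} (w1 w2 : T) (h : T -> R) (l : R) :
  b2R (level h l w1 || level h l w2) = ind_lt (Rmax (h w1) (h w2)) l.
Proof.
  unfold level, ind_lt, b2R.
  destruct (Rlt_dec l (h w1)), (Rlt_dec l (h w2)), (Rlt_dec l (Rmax (h w1) (h w2)));
    simpl; auto; exfalso; unfold Rmax in *; destruct (Rle_dec (h w1) (h w2)); lra.
Qed.

Lemma qmeasure_empty {T : Type} (mu : event T -> R) :
  is_qmeasure mu -> mu ev_empty = 0.
Proof.
  intros [_ hadd].
  assert (H0 : ev_disjoint (@ev_empty T) ev_empty) by (intro; reflexivity).
  assert (Hu : ev_union (@ev_empty T) ev_empty = ev_empty) by reflexivity.
  pose proof (hadd _ _ _ H0 H0 H0) as E; rewrite !Hu in E; lra.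
Qed.

Lemma ev_singleton_self {T : Type} (eqd : forall x y : T, {x = y} + {x <> y}) (a : T) :
  ev_singleton eqd a a = true.
Proof. unfold ev_singleton; now destruct (eqd a a). Qed.

Lemma ev_singleton_neq {T : Type} (eqd : forall x y : T, {x = y} + {x <> y}) (a w : T) :
  w <> a -> ev_singleton eqd a w = false.
Proof. unfold ev_singleton; now destruct (eqd w a). Qed.

Section TwoPointSpace.

Variables (T : Type) (w1 w2 : T).
Hypothesis hcov : forall w, w = w1 \/ w = w2.

Lemma event_eq_two_point (A B : event T) : A w1 = B w1 -> A w2 = B w2 -> A = B.
Proof.
  intros E1 E2; apply functional_extensionality; intros w.
  now destruct (hcov w) as [-> | ->].
Qed.

Definition qmax (h : T -> R) : R := Rmax 0 (Rmax (h w1) (h w2)).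

Lemma is_qint_one_coevent (h : T -> R) (I : R) :
  is_qint h (one_coevent w1 w2) I <-> I = qmax h.
Proof.
  set (m := Rmax (h w1) (h w2)).
  assert (Hint : forall l, b2R (one_coevent w1 w2 (level h l)) = ind_lt m l).
  { intros l; rewrite one_coevent_orb; apply b2R_orb_level. }
  split.
  - intros [M [HM [Hbound [pr <-]]]].
    assert (HmM : m <= M) by (apply Rmax_lub; auto).
    destruct (RiemannInt_ind_lt m M HM HmM) as [pr' Hpr'].
    rewrite <- (Hpr' : _ = qmax h); apply RiemannInt_P18; auto.
  - intros ->; exists (qmax h); split; [apply Rmax_l|split].
    + intros w; eapply Rle_trans; [|apply Rmax_r].
      destruct (hcov w) as [-> | ->]; [apply Rmax_l|apply Rmax_r].
    + destruct (RiemannInt_ind_lt m (qmax h) (Rmax_l _ _) (Rmax_r _ _)) as [pr' Hpr'].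
      assert (pr : Riemann_integrable (fun l => b2R (one_coevent w1 w2 (level h l))) 0 (qmax h)).
      { apply Riemann_integrable_ext with (ind_lt m); auto. }
      exists pr; rewrite <- (Hpr' : _ = qmax h); apply RiemannInt_P18; auto; apply Rmax_l.
Qed.

Lemma actualizes_one_coevent (mu : event T -> R) :
  actualizes mu (one_coevent w1 w2) <->
  exists f : T -> T -> R,
    (forall x y, f x y = f y x) /\ (forall x y, 0 < f x y) /\
    forall A, mu A = qmax (fun w' => qmax (fun w => f w w' * chi A w)).
Proof.
  split.
  - intros [f [fsym [fpos [g [Hg Hmu]]]]]; exists f; do 2 (split; auto).
    intros A; rewrite (proj1 (is_qint_one_coevent _ _) (Hmu A)); unfold qmax at 1.
    now rewrite !(proj1 (is_qint_one_coevent _ _) (Hg A _)).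
  - intros [f [fsym [fpos Hmu]]]; exists f; do 2 (split; auto).
    exists (fun A w' => qmax (fun w => f w w' * chi A w)); split.
    + intros A w'; now apply is_qint_one_coevent.
    + intros A; now apply is_qint_one_coevent.
Qed.

Lemma qmax_chi (h : T -> R) (A : event T) : (forall w, 0 < h w) ->
  qmax (fun w => h w * chi A w) =
  if A w1 then (if A w2 then Rmax (h w1) (h w2) else h w1)
  else (if A w2 then h w2 else 0).
Proof.
  intros hpos; pose proof (hpos w1); pose proof (hpos w2).
  unfold qmax, chi, b2R; destruct (A w1), (A w2); rewrite ?Rmult_1_r, ?Rmult_0_r;
    unfold Rmax; repeat destruct Rle_dec; lra.
Qed.

Lemma qmax_qmax_chi (f : T -> T -> R) (A : event T) : (forall x y, 0 < f x y) ->
  qmax (fun w' => qmax (fun w => f w w' * chi A w)) =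
  if A w1 then
    (if A w2 then Rmax (Rmax (f w1 w1) (f w1 w2)) (Rmax (f w2 w1) (f w2 w2))
     else Rmax (f w1 w1) (f w1 w2))
  else (if A w2 then Rmax (f w2 w1) (f w2 w2) else 0).
Proof.
  intros fpos; unfold qmax at 1; rewrite !qmax_chi by auto.
  pose proof (fpos w1 w1); pose proof (fpos w1 w2);
    pose proof (fpos w2 w1); pose proof (fpos w2 w2).
  destruct (A w1), (A w2); unfold Rmax; repeat destruct Rle_dec; lra.
Qed.

End TwoPointSpace.

Theorem theorem4p3 (T : Type) (eqd : forall x y : T, {x = y} + {x <> y})
  (w1 w2 : T) (hne : w1 <> w2) (hcov : forall w, w = w1 \/ w = w2)
  (mu : event T -> R) (hmu : is_qmeasure mu) :
  actualizes mu (one_coevent w1 w2) <->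
  (mu (ev_singleton eqd w1) <> 0 /\ mu (ev_singleton eqd w2) <> 0 /\
   mu ev_full = Rmax (mu (ev_singleton eqd w1)) (mu (ev_singleton eqd w2))).
Proof.
  set (s := ev_singleton eqd).
  assert (Hs11 : s w1 w1 = true) by apply ev_singleton_self.
  assert (Hs22 : s w2 w2 = true) by apply ev_singleton_self.
  assert (Hs12 : s w1 w2 = false) by (apply ev_singleton_neq; auto).
  assert (Hs21 : s w2 w1 = false) by (apply ev_singleton_neq; auto).
  rewrite actualizes_one_coevent by exact hcov.
  split.
  - intros [f [_ [fpos Hmu]]].
    rewrite !Hmu, !qmax_qmax_chi by exact fpos.
    rewrite Hs11, Hs22, Hs12, Hs21; cbn.
    pose proof (fpos w1 w1); pose proof (fpos w2 w2).
    split; [|split]; [..|reflexivity]; unfold Rmax; destruct Rle_dec; lra.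
  - intros [H1 [H2 Hfull]].
    assert (Hpos : forall w, 0 < mu (s w)).
    { intros w; destruct hmu as [hnn _].
      destruct (hcov w) as [-> | ->]; pose proof (hnn (s w1)); pose proof (hnn (s w2)); lra. }
    exists (fun x y => Rmin (mu (s x)) (mu (s y))); split; [|split].
    + intros x y; apply Rmin_comm.
    + intros x y; now apply Rmin_glb_lt.
    + intros A; rewrite qmax_qmax_chi by (intros; now apply Rmin_glb_lt).
      pose proof (Hpos w1); pose proof (Hpos w2).
      destruct (A w1) eqn:E1, (A w2) eqn:E2.
      * rewrite (event_eq_two_point _ _ _ hcov A ev_full) by auto; rewrite Hfull.
        unfold Rmin, Rmax; repeat destruct Rle_dec; lra.
      * rewrite (event_eq_two_point _ _ _ hcov A (s w1)) by congruence.
        unfold Rmin, Rmax; repeat destruct Rle_dec; lra.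
      * rewrite (event_eq_two_point _ _ _ hcov A (s w2)) by congruence.
        unfold Rmin, Rmax; repeat destruct Rle_dec; lra.
      * rewrite (event_eq_two_point _ _ _ hcov A ev_empty) by auto.
        now apply qmeasure_empty.
Qed.
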